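(* Let $q\in(0,\tfrac12)$ and let $T\sim U(0,1)$, $S\sim U(-1,0)$ be independent. Let $p_3^{SH}$ be the probability that $$P_{T,S}(x)=(T+S-1)x^3+\big(1-T-2S+q(S-1-T)\big)x^2+\big(S+q(T-S)\big)x$$ has exactly three distinct roots in $[0,1]$. Then $$p_3^{SH}=\frac{1}{1-2q}\,\mathrm{Area}(D\cap D_1),$$ where $D=\{(x,y)\in\mathbb{R}^2:\ -1<x<0,\ -\frac{x^2}{4q}-q<y<-q\}$ and $D_1$ is the open quadrilateral with consecutive vertices $A=(-1,-1)$, $B=(-(1-q),-q)$, $O=(0,0)$, $C=(-q,-(1-q))$ (equivalently, $D_1$ is the image of $(-1,0)^2$ under the linear map $(t,s)\mapsto((1-q)t+qs,\ qt+(1-q)s)$).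
   Context: ''Area'' denotes two-dimensional Lebesgue measure. *)

From HB Require Import structures.
From mathcomp Require Import all_boot all_order all_algebra.
From mathcomp Require Import all_classical all_reals all_analysis.
Set Implicit Arguments. Unset Strict Implicit. Unset Printing Implicit Defensive.
Import Order.TTheory GRing.Theory Num.Theory.
Local Open Scope classical_set_scope.
Local Open Scope ring_scope.

Definition PTS {R : realType} (q t s x : R) : R :=
  (t + s - 1) * x ^+ 3
  + (1 - t - 2 * s + q * (s - 1 - t)) * x ^+ 2
  + (s + q * (t - s)) * x.

Definition three_roots {R : realType} (q t s : R) : Prop :=
  exists x1 x2 x3 : R,
    [/\ 0 <= x1, x1 < x2, x2 < x3 & x3 <= 1] /\
    [/\ PTS q t s x1 = 0, PTS q t s x2 = 0 & PTS q t s x3 = 0] /\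
    (forall x, 0 <= x <= 1 -> PTS q t s x = 0 -> x = x1 \/ x = x2 \/ x = x3).

Definition event3 {R : realType} (q : R) : set (R * R) :=
  [set ts | three_roots q ts.1 ts.2].

Definition regD {R : realType} (q : R) : set (R * R) :=
  [set xy | -1 < xy.1 < 0 /\ - (xy.1 ^+ 2) / (4 * q) - q < xy.2 < - q].

Definition regD1 {R : realType} (q : R) : set (R * R) :=
  [set ((1 - q) * ts.1 + q * ts.2, q * ts.1 + (1 - q) * ts.2) |
     ts in [set ts : R * R | -1 < ts.1 < 0 /\ -1 < ts.2 < 0]].

Lemma lt01 {R : realType} : (0 : R) < 1. Proof. exact: ltr01. Qed.
Lemma ltm10 {R : realType} : (-1 : R) < 0. Proof. by rewrite ltrN10. Qed.

Definition lawTS (R : realType) : set (R * R) -> \bar R :=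
  (uniform_prob (@lt01 R) \x uniform_prob (@ltm10 R))%E.

Definition area (R : realType) : set (R * R) -> \bar R :=
  ((@lebesgue_measure R) \x (@lebesgue_measure R))%E.

From HB Require Import structures.
From mathcomp Require Import all_boot all_order all_algebra.
From mathcomp Require Import all_classical all_reals all_analysis.
From mathcomp Require Import measurable_realfun.
From mathcomp Require Import ring lra.
Import Order.TTheory GRing.Theory Num.Theory.
Local Open Scope classical_set_scope.
Local Open Scope ring_scope.

(* P_{t,s}(x) = x Q(x) for a quadratic Q = a x^2 + b x + c with a + b + c = -q,
   so P has three roots in [0,1] iff Q has two distinct roots in (0,1), and since
   Q(1) < 0 this is the system a < 0, c < 0, b^2 - 4ac > 0, b > 0, b + 2a < 0.
   If (X, Y) is the image of (t - 1, s) under (u, v) |-> ((1-q)u + qv, qu + (1-q)v),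
   then a = X + Y, b = -X - 2Y - 2q, c = Y + q, and for (t, s) in the support
   (0,1) x (-1,0) of the law of (T, S) the system reduces to (X, Y) in D.  Hence
   D /\ D1 is the preimage of the event restricted to the support under an affine
   bijection whose linear part has determinant 1/(1 - 2q), and the law of (T, S)
   is the area on its support. *)

Definition quadr {R : pzRingType} (a b c z : R) : R := a * z ^+ 2 + b * z + c.

Lemma quadr_vieta {R : idomainType} {a b c x y : R} : x != y ->
  quadr a b c x = 0 -> quadr a b c y = 0 -> b = - (a * (x + y)) /\ c = a * (x * y).
Proof.
move=> xy Qx Qy.
have hb : b = - (a * (x + y)).
  have : (x - y) * (a * (x + y) + b) = quadr a b c x - quadr a b c y.
    by rewrite /quadr; ring.
  rewrite Qx Qy subrr => /eqP; rewrite mulf_eq0 subr_eq0 (negbTE xy) /= addrC.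
  by rewrite addr_eq0 => /eqP.
split=> //; apply/eqP; rewrite -subr_eq0.
have -> : c - a * (x * y) = quadr a b c x by rewrite /quadr hb; ring.
by rewrite Qx.
Qed.

Lemma quadr_factor {R : comPzRingType} {a b c x y : R} (z : R) :
  b = - (a * (x + y)) -> c = a * (x * y) -> quadr a b c z = a * ((z - x) * (z - y)).
Proof. by move=> -> ->; rewrite /quadr; ring. Qed.

Definition two_roots01 {R : realDomainType} (a b c : R) : Prop :=
  exists x y, [/\ 0 < x, x < y, y < 1, quadr a b c x = 0 & quadr a b c y = 0].

Lemma two_roots01P {R : rcfType} {a b c : R} : a + b + c < 0 ->
  two_roots01 a b c <->
  [/\ a < 0, c < 0, 0 < b ^+ 2 - 4 * a * c, 0 < b & b + 2 * a < 0].
Proof.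
move=> abc; split.
  move=> [x [y [x0 xy y1 Qx Qy]]].
  have [hb hc] := quadr_vieta (negbT (lt_eqF xy)) Qx Qy.
  rewrite hb hc in abc *.
  have a_lt0 : a < 0.
    have : a + - (a * (x + y)) + a * (x * y) = a * ((1 - x) * (1 - y)) by ring.
    have : 0 < (1 - x) * (1 - y) by apply: mulr_gt0; lra.
    nra.
  have xy_gt0 : 0 < x * y by apply: mulr_gt0; lra.
  split; [done|nra| |nra|nra].
  have -> : (- (a * (x + y))) ^+ 2 - 4 * a * (a * (x * y)) = (a * (x - y)) ^+ 2 by ring.
  by rewrite exprn_even_gt0 //= mulf_neq0 // ?subr_eq0 lt_eqF //; lra.
move=> [a_lt0 c_lt0 d_gt0 b_gt0 ba_lt0].
set d := b ^+ 2 - 4 * a * c in d_gt0.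
set e := Num.sqrt d.
have e2 : e ^+ 2 = d by rewrite sqr_sqrtr // ltW.
have e_gt0 : 0 < e by rewrite sqrtr_gt0.
(* b^2 - d = 4ac > 0 and (2a + b)^2 - d = 4a(a + b + c) > 0 *)
have e_lt_b : e < b.
  by rewrite -(ltr_pXn2r (n := 2)) ?nnegrE ?ltW // e2 /d; nra.
have e_lt_ab : e < - (2 * a) - b.
  rewrite -(ltr_pXn2r (n := 2)) ?nnegrE ?ltW //; last lra.
  by rewrite e2 /d; nra.
have a2_gt0 : 0 < - (2 * a) by lra.
exists ((b - e) / - (2 * a)), ((b + e) / - (2 * a)).
have hsum : b = - (a * ((b - e) / - (2 * a) + (b + e) / - (2 * a))).
  by field; rewrite lt_eqF.
have hprod : c = a * ((b - e) / - (2 * a) * ((b + e) / - (2 * a))).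
  have -> : a * ((b - e) / - (2 * a) * ((b + e) / - (2 * a))) = (b ^+ 2 - e ^+ 2) / (4 * a).
    by field; rewrite lt_eqF.
  by rewrite e2 /d; field; rewrite lt_eqF.
rewrite !(quadr_factor _ hsum hprod) !subrr !(mul0r, mulr0); split=> //.
- by rewrite divr_gt0 // subr_gt0.
- by rewrite ltr_pM2r ?invr_gt0 //; lra.
- by rewrite ltr_pdivrMr //; lra.
Qed.

Definition pts_a {R : pzRingType} (t s : R) : R := t + s - 1.
Definition pts_b {R : pzRingType} (q t s : R) : R := 1 - t - 2 * s + q * (s - 1 - t).
Definition pts_c {R : pzRingType} (q t s : R) : R := s + q * (t - s).

Section CubicRoots.
Variable R : realType.
Implicit Types q t s x : R.

Lemma PTS_quadr q t s x :
  PTS q t s x = x * quadr (pts_a t s) (pts_b q t s) (pts_c q t s) x.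
Proof. by rewrite /PTS /quadr /pts_a /pts_b /pts_c; ring. Qed.

Lemma pts_coef_sum q t s : pts_a t s + pts_b q t s + pts_c q t s = - q.
Proof. by rewrite /pts_a /pts_b /pts_c; ring. Qed.

Lemma three_rootsP q t s : 0 < q ->
  three_roots q t s <-> two_roots01 (pts_a t s) (pts_b q t s) (pts_c q t s).
Proof.
move=> q_gt0; have sum_lt0 : pts_a t s + pts_b q t s + pts_c q t s < 0.
  by rewrite pts_coef_sum oppr_lt0.
pose Q := quadr (pts_a t s) (pts_b q t s) (pts_c q t s).
have PTSE x : PTS q t s x = x * Q x := PTS_quadr q t s x.
have PQ x : 0 < x -> PTS q t s x = 0 -> Q x = 0.
  by move=> x0; rewrite PTSE => /eqP; rewrite mulf_eq0 gt_eqF //= => /eqP.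
have Q1 : Q 1 != 0 by rewrite /Q /quadr expr1n !mulr1 lt_eqF.
split.
  move=> [x1 [x2 [x3 [[x10 x12 x23 x31] [[_ P2 P3] _]]]]].
  exists x2, x3; split=> //; [lra| |apply: PQ => //; lra..].
  by rewrite lt_neqAle x31 andbT; apply: contra_neq Q1 => <-; apply: PQ => //; lra.
move=> roots; have [a_lt0 _ _ _ _] := (two_roots01P sum_lt0).1 roots.
move: roots => [x [y [x0 xy y1 Qx Qy]]].
have [hb hc] := quadr_vieta (negbT (lt_eqF xy)) Qx Qy.
exists 0, x, y; split; first by split=> //; lra.
split; first by split; rewrite PTSE /Q ?Qx ?Qy ?mul0r ?mulr0.
move=> z _; rewrite PTSE /Q (quadr_factor _ hb hc) => /eqP.
rewrite !mulf_eq0 (lt_eqF a_lt0) !subr_eq0 /=.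
by case/or3P => /eqP ->; [left|right; left|right; right].
Qed.

Lemma event3P q t s : 0 < q -> event3 q (t, s) <->
  [/\ pts_a t s < 0, pts_c q t s < 0,
      0 < pts_b q t s ^+ 2 - 4 * pts_a t s * pts_c q t s,
      0 < pts_b q t s & pts_b q t s + 2 * pts_a t s < 0].
Proof.
move=> q_gt0; rewrite /event3 /= three_rootsP //; apply: two_roots01P.
by rewrite pts_coef_sum oppr_lt0.
Qed.

End CubicRoots.

Lemma measurable_lt_set {R : realType} {d} {T : measurableType d} (f g : T -> R) :
  measurable_fun setT f -> measurable_fun setT g -> measurable [set x | f x < g x].
Proof.
move=> mf mg; have := measurable_fun_ltr mf mg measurableT (Y := [set true]) I.
by rewrite setTI.
Qed.

Ltac measurable_polynomial := repeat first
  [ apply: measurable_funD | apply: measurable_funB | apply: measurable_funM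
  | apply: measurable_funN | apply: measurable_funX | apply: measurable_cst
  | exact: measurable_fst | exact: measurable_snd ].

Lemma measurable_event3 {R : realType} (q : R) : 0 < q -> measurable (event3 q).
Proof.
move=> q_gt0.
have -> : event3 q = [set ts | pts_a ts.1 ts.2 < 0] `&` [set ts | pts_c q ts.1 ts.2 < 0]
    `&` [set ts | 0 < pts_b q ts.1 ts.2 ^+ 2 - 4 * pts_a ts.1 ts.2 * pts_c q ts.1 ts.2]
    `&` [set ts | 0 < pts_b q ts.1 ts.2]
    `&` [set ts | pts_b q ts.1 ts.2 + 2 * pts_a ts.1 ts.2 < 0].
  apply/seteqP; split => -[t s] /=; first by move/event3P => [].
  by move=> [[[[? ?] ?] ?] ?]; apply/event3P.
rewrite /pts_a /pts_b /pts_c.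
by repeat apply: measurableI; apply: measurable_lt_set; measurable_polynomial.
Qed.

Section AreaPreimageAffine.
Variable R : realType.
Local Notation lambda := (@lebesgue_measure R).
Implicit Types A : set (R * R).

Lemma lebesgue_measure_preimage_affine (b d : R) (S : set R) : 0 < b -> measurable S ->
  lambda [set y | S (b * y + d)] = ((b^-1)%:E * lambda S)%E.
Proof.
move=> b0 mS.
pose f : measurableTypeR R -> measurableTypeR R := fun y => b * y + d.
have mf : measurable_fun setT f by apply: measurable_funD.
(* The measure structure of [pushforward lambda f] depends on [mf], which
   unification cannot find: it is supplied after [Unshelve]. *)
refine (let mu : {measure set (measurableTypeR R) -> \bar R} :=
  mscale (NngNum (normr_ge0 b)) (pushforward lambda f) in _).
have lambda_mu X : measurable X -> lambda X = mu X.
  apply: lebesgue_measure_unique => _ [[x1 x2] _ <-].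
  have -> : mu `]x1, x2]%classic = (`|b|%:E * lambda (f @^-1` `]x1, x2]%classic))%E by [].
  have -> : f @^-1` `]x1, x2] = `](x1 - d) / b, (x2 - d) / b]%classic.
    apply/seteqP; split => y; rewrite /f /= !in_itv /= => /andP[h1 h2];
      apply/andP; split.
    - by rewrite ltr_pdivrMr // ltrBlDr mulrC.
    - by rewrite ler_pdivlMr // lerBrDr mulrC.
    - by move: h1; rewrite ltr_pdivrMr // ltrBlDr mulrC.
    - by move: h2; rewrite ler_pdivlMr // lerBrDr mulrC.
  rewrite !lebesgue_measure_itv /= !lte_fin ltr_pM2r ?invr_gt0 //.
  rewrite ltrBlDr subrK; case: ifP => _; last by rewrite mule0.
  by rewrite -EFinD -EFinM gtr0_norm //; congr (_%:E); field; exact: lt0r_neq0.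
rewrite [in RHS]lambda_mu //.
have -> : mu S = (`|b|%:E * lambda (f @^-1` S))%E by [].
rewrite gtr0_norm // muleA -EFinM mulVf ?mul1e //.
exact: lt0r_neq0.
Unshelve. all: exact: mf.
Qed.

Lemma measurable_fun_affine_form (a b e : R) :
  measurable_fun setT (fun p : R * R => a * p.1 + b * p.2 + e).
Proof.
apply: measurable_funD => //; apply: measurable_funD => //.
- by apply: measurable_funM => //; exact: measurable_fst.
- by apply: measurable_funM => //; exact: measurable_snd.
Qed.

Lemma measurable_preimage_hshear k b c A : measurable A ->
  measurable [set p | A (b * p.1 + k * p.2 + c, p.2)].
Proof.
move=> mA; have mg : measurable_fun setT (fun p : R * R => (b * p.1 + k * p.2 + c, p.2)).
  exact: measurable_fun_pair (measurable_fun_affine_form _ _ _) measurable_snd.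
by have := mg measurableT A mA; rewrite setTI.
Qed.

Lemma area_ysectionE A : measurable A ->
  area A = (\int[lambda]_y lambda (ysection A y))%E.
Proof.
move=> mA; transitivity ((lambda \x^ lambda)%E A) => //.
by apply: product_measure_unique => // X Y mX mY; exact: product_measure2E.
Qed.

Lemma area_preimage_vshear k b c A : 0 < b -> measurable A ->
  area [set p | A (p.1, k * p.1 + b * p.2 + c)] = ((b^-1)%:E * area A)%E.
Proof.
move=> b0 mA; rewrite /area /product_measure1 /=.
under eq_integral => x _.
  have -> : xsection [set p | A (p.1, k * p.1 + b * p.2 + c)] x =
       [set y | xsection A x (b * y + (k * x + c))].
    by apply/seteqP; split => y; rewrite /xsection /= !inE /= addrCA addrA.
  rewrite lebesgue_measure_preimage_affine //; last exact: measurable_xsection.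
  over.
by rewrite ge0_integralZl ?lee_fin ?invr_ge0 ?(ltW b0) //; exact: measurable_fun_xsection.
Qed.

Lemma area_preimage_hshear k b c A : 0 < b -> measurable A ->
  area [set p | A (b * p.1 + k * p.2 + c, p.2)] = ((b^-1)%:E * area A)%E.
Proof.
move=> b0 mA; rewrite !area_ysectionE //; last exact: measurable_preimage_hshear.
under eq_integral => y _.
  have -> : ysection [set p | A (b * p.1 + k * p.2 + c, p.2)] y =
       [set x | ysection A y (b * x + (k * y + c))].
    by apply/seteqP; split => x; rewrite /ysection /= !inE /= addrA.
  rewrite lebesgue_measure_preimage_affine //; last exact: measurable_ysection.
  over.
by rewrite ge0_integralZl ?lee_fin ?invr_ge0 ?(ltW b0) //; exact: measurable_fun_ysection.
Qed.

Lemma area_preimage_affine a b c d e f A : 0 < d -> 0 < a * d - b * c -> measurable A ->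
  area [set p | A (a * p.1 + b * p.2 + e, c * p.1 + d * p.2 + f)] =
  (((a * d - b * c)^-1)%:E * area A)%E.
Proof.
move=> d0 det0 mA.
pose H := [set p | A ((a * d - b * c) / d * p.1 + b / d * p.2 + (e - b * f / d), p.2)].
have shearE (p : R * R) : (a * d - b * c) / d * p.1 + b / d * (c * p.1 + d * p.2 + f)
    + (e - b * f / d) = a * p.1 + b * p.2 + e.
  by field; exact: lt0r_neq0.
have -> : [set p | A (a * p.1 + b * p.2 + e, c * p.1 + d * p.2 + f)] =
    [set p | H (p.1, c * p.1 + d * p.2 + f)].
  by apply/seteqP; split => p; rewrite /H /= shearE.
rewrite area_preimage_vshear //; last exact: measurable_preimage_hshear.
rewrite area_preimage_hshear ?divr_gt0 // muleA -EFinM.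
by congr (_%:E * _)%E; field; apply/andP; split; exact: lt0r_neq0.
Qed.

End AreaPreimageAffine.

Section UniformLaw.
Variable R : realType.
Local Notation lambda := (@lebesgue_measure R).

Lemma uniform_probE (a b : R) (ab : a < b) (S : set R) : measurable S ->
  uniform_prob ab S = (((b - a)^-1)%:E * lambda (S `&` `]a, b[))%E.
Proof.
move=> mS.
have mI : measurable_fun setT (fun y => (\1_S y : R)%:E).
  exact/measurable_EFinP/measurable_indic.
rewrite -[in LHS](setIT S) -(integral_indic (uniform_prob ab) measurableT mS).
rewrite integral_uniform // integral_itv_bndoo; last exact: measurable_funS mI.
by rewrite integral_indic.
Qed.

Lemma lawTS_area (G : set (R * R)) : measurable G ->
  lawTS G = area (G `&` (`]0, 1[ `*` `]-1, 0[)).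
Proof.
move=> mG.
have stripE x : xsection G x `&` `]-1, 0[ = xsection (G `&` (setT `*` `]-1, 0[)) x.
  by rewrite xsectionI in_xsectionX // inE.
have mstrip : measurable (G `&` (setT `*` `]-1, 0[)).
  by apply: measurableI => //; exact: measurableX.
rewrite /lawTS /area /product_measure1 /=.
under eq_integral => x _.
  rewrite uniform_probE; last exact: measurable_xsection.
  rewrite sub0r opprK invr1 mul1e stripE.
  over.
rewrite integral_uniform //; last exact: measurable_fun_xsection.
rewrite subr0 invr1 mul1e integral_itv_bndoo; last first.
  exact/measurable_funTS/measurable_fun_xsection.
rewrite integral_mkcond; apply: eq_integral => x _ /=.
rewrite patchE -stripE xsectionI; case: ifPn => x01.
  by rewrite in_xsectionX // setIA.
by rewrite notin_xsectionX // !setI0 measure0.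
Qed.

End UniformLaw.

Section Quadrilateral.
Variable R : realType.
Implicit Types q u v : R.

Lemma regD1_mixP q u v : 2 * q < 1 ->
  regD1 q ((1 - q) * u + q * v, q * u + (1 - q) * v) <-> -1 < u < 0 /\ -1 < v < 0.
Proof.
move=> q_lt; split; last by move=> uv; exists (u, v).
move=> [[u' v'] /= uv' [eX eY]].
have m_neq0 : 1 - 2 * q != 0 by rewrite gt_eqF // subr_gt0.
have du : (1 - 2 * q) * (u' - u) = 0.
  transitivity ((1 - q) * ((1 - q) * u' + q * v' - ((1 - q) * u + q * v))
    - q * (q * u' + (1 - q) * v' - (q * u + (1 - q) * v))); first by ring.
  by rewrite eX eY !subrr !mulr0 subrr.
have dv : (1 - 2 * q) * (v' - v) = 0.
  transitivity ((1 - q) * (q * u' + (1 - q) * v' - (q * u + (1 - q) * v))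
    - q * ((1 - q) * u' + q * v' - ((1 - q) * u + q * v))); first by ring.
  by rewrite eX eY !subrr !mulr0 subrr.
move: du dv => /eqP + /eqP; rewrite !mulf_eq0 (negbTE m_neq0) !subr_eq0 /=.
by move=> /eqP <- /eqP <-.
Qed.

Lemma regD_mixP q u v : 0 < q -> 2 * q < 1 -> -1 < u < 0 -> -1 < v < 0 ->
  regD q ((1 - q) * u + q * v, q * u + (1 - q) * v) <-> event3 q (u + 1, v).
Proof.
move=> q_gt0 q_lt /andP[u1 u0] /andP[v1 v0]; rewrite event3P //.
set X : R := (1 - q) * u + q * v; set Y : R := q * u + (1 - q) * v.
have q1 : 0 < 1 - q by lra.
have X_gt : -1 < X by rewrite /X; nra.
have X_lt0 : X < 0 by rewrite /X; nra.
have Y_lt0 : Y < 0 by rewrite /Y; nra.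
have -> : pts_a (u + 1) v = X + Y by rewrite /pts_a /X /Y; ring.
have -> : pts_b q (u + 1) v = - X - 2 * Y - 2 * q by rewrite /pts_b /X /Y; ring.
have -> : pts_c q (u + 1) v = Y + q by rewrite /pts_c /Y; ring.
have -> : (- X - 2 * Y - 2 * q) ^+ 2 - 4 * (X + Y) * (Y + q) = X ^+ 2 + 4 * q * (Y + q).
  by ring.
have lowerE : (- X ^+ 2 / (4 * q) - q < Y) = (0 < X ^+ 2 + 4 * q * (Y + q)).
  rewrite -subr_gt0 (_ : Y - _ = (X ^+ 2 + 4 * q * (Y + q)) / (4 * q)).
    by rewrite pmulr_lgt0 // invr_gt0 mulr_gt0.
  by field; rewrite gt_eqF.
rewrite /regD /= lowerE; split.
  by move=> [_ /andP[disc hi]]; split => //; lra.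
by move=> [_ Yq disc _ _]; split; apply/andP; split => //; lra.
Qed.

Lemma regD_regD1E q : 0 < q -> 2 * q < 1 -> regD q `&` regD1 q =
  [set p | (event3 q `&` (`]0, 1[ `*` `]-1, 0[))
     ((1 - q) / (1 - 2 * q) * p.1 + (- q / (1 - 2 * q)) * p.2 + 1,
      (- q / (1 - 2 * q)) * p.1 + (1 - q) / (1 - 2 * q) * p.2 + 0)].
Proof.
move=> q_gt0 q_lt; have m_neq0 : 1 - 2 * q != 0 by rewrite gt_eqF // subr_gt0.
apply/seteqP; split => -[x y] /=;
  pose u := ((1 - q) * x - q * y) / (1 - 2 * q);
  pose v := (- q * x + (1 - q) * y) / (1 - 2 * q);
  (have -> : (1 - q) / (1 - 2 * q) * x + - q / (1 - 2 * q) * y + 1 = u + 1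
    by rewrite /u; field);
  (have -> : - q / (1 - 2 * q) * x + (1 - q) / (1 - 2 * q) * y + 0 = v
    by rewrite /v; field);
  (have -> : (x, y) = ((1 - q) * u + q * v, q * u + (1 - q) * v)
    by congr pair; rewrite /u /v; field);
  rewrite !in_itv /=.
  move=> [hD /(regD1_mixP _ _ _ q_lt) [uI vI]].
  split; first exact/(regD_mixP _ _ _ q_gt0 q_lt uI vI).
  by move: uI vI => /andP[? ?] /andP[? ?]; split; apply/andP; split; lra.
move=> [hE [/andP[u0 u1] vI]]; have uI : -1 < u < 0 by apply/andP; split; lra.
by split; [apply/(regD_mixP _ _ _ q_gt0 q_lt uI vI) | apply/(regD1_mixP _ _ _ q_lt)].
Qed.

End Quadrilateral.

Theorem proposition2p2 (R : realType) (q : R) (hq0 : 0 < q) (hq1 : q < 1 / 2) :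
  lawTS (event3 q) = (((1 - 2 * q)^-1)%:E * area (regD q `&` regD1 q))%E.
Proof.
have q_lt : 2 * q < 1 by move: hq1; rewrite ltr_pdivlMr // mulrC.
have m_gt0 : 0 < 1 - 2 * q by rewrite subr_gt0.
have detE : (1 - q) / (1 - 2 * q) * ((1 - q) / (1 - 2 * q))
    - (- q / (1 - 2 * q)) * (- q / (1 - 2 * q)) = (1 - 2 * q)^-1.
  by field; rewrite gt_eqF.
have mE : measurable (event3 q) by exact: measurable_event3.
rewrite lawTS_area // regD_regD1E // area_preimage_affine; first last.
- by apply: measurableI => //; exact: measurableX.
- by rewrite detE invr_gt0.
- by rewrite divr_gt0 //; lra.
by rewrite detE invrK muleA -EFinM mulVf ?gt_eqF // mul1e.
Qed.
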